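(* Let $G$ be a graph with minimum degree $\delta(G)\ge 2$. Then (1) $G$ has a $\gamma$-set $D$ such that every vertex in $D$ has at least two neighbors in $V_G-D$; and (2) $\gamma(G)=\gamma_{\rm cer}(G)$.
   Context: All graphs are finite and simple; $\delta(G)$ denotes the minimum degree of $G$. A set $D\subseteq V_G$ is a dominating set of $G$ if every vertex of $V_G-D$ has a neighbor in $D$; $\gamma(G)$ is the minimum cardinality of a dominating set, and a $\gamma$-set is a dominating set of cardinality $\gamma(G)$. A set $D\subseteq V_G$ is a certified dominating set of $G$ if $D$ is a dominating set of $G$ and every vertex of $D$ has either zero or at least two neighbors in $V_G-D$; $\gamma_{\rm cer}(G)$ is the minimum cardinality of a certified dominating set of $G$. *)

From mathcomp Require Import all_boot.
Set Implicit Arguments. Unset Strict Implicit. Unset Printing Implicit Defensive.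

Section Graph.
Variables (T : finType) (e : rel T).

Definition simple_graph : Prop := symmetric e /\ irreflexive e.

Definition nbhd (v : T) : {set T} := [set u | e v u].
Definition deg (v : T) : nat := #|nbhd v|.

Definition min_degree_ge (k : nat) : Prop := forall v : T, k <= deg v.

Definition dominating (D : {set T}) : bool :=
  [forall v, (v \notin D) ==> [exists u in D, e v u]].

Definition certified_dominating (D : {set T}) : bool :=
  dominating D &&
  [forall v in D, (#|nbhd v :\: D| == 0) || (2 <= #|nbhd v :\: D|)].

Lemma dominating_setT : dominating setT.
Proof. by apply/forallP => v; rewrite in_setT. Qed.

Lemma certified_setT : certified_dominating setT.
Proof.
rewrite /certified_dominating dominating_setT /=.
apply/forallP => v; apply/implyP => _.
by rewrite setDT cards0.
Qed.

Lemma ex_dominating : exists n, [exists D : {set T}, dominating D && (#|D| == n)].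
Proof. by exists #|[set: T]|; apply/existsP; exists setT; rewrite dominating_setT eqxx. Qed.

Lemma ex_certified :
  exists n, [exists D : {set T}, certified_dominating D && (#|D| == n)].
Proof. by exists #|[set: T]|; apply/existsP; exists setT; rewrite certified_setT eqxx. Qed.

Definition domination_number : nat := ex_minn ex_dominating.
Definition cert_domination_number : nat := ex_minn ex_certified.

Definition gamma_set (D : {set T}) : bool :=
  dominating D && (#|D| == domination_number).

End Graph.

(* Among all gamma-sets choose one, D, spanning the fewest edges. If some
   v in D had no neighbour outside D, then D - v would still dominate (v keeps
   a neighbour in D), contradicting minimality of |D|. If v had exactly one
   outside neighbour u, then v still has a neighbour w in D since deg v >= 2;
   either u has a neighbour in D - v, and again D - v dominates, or it has none,
   and the swap D - v + u is a gamma-set spanning fewer edges (the edge vw is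
   lost, no edge at u is gained). Such a D is certified, so
   gamma_cer <= gamma, while gamma <= gamma_cer holds in every graph. *)
From mathcomp Require Import all_boot.
Set Implicit Arguments. Unset Strict Implicit. Unset Printing Implicit Defensive.

Section Domination.
Variables (T : finType) (e : rel T).

Lemma domination_number_le (D : {set T}) :
  dominating e D -> domination_number e <= #|D|.
Proof.
move=> domD; rewrite /domination_number; case: ex_minnP => m _; apply.
by apply/existsP; exists D; rewrite domD eqxx.
Qed.

Lemma cert_domination_number_le (D : {set T}) :
  certified_dominating e D -> cert_domination_number e <= #|D|.
Proof.
move=> certD; rewrite /cert_domination_number; case: ex_minnP => m _; apply.
by apply/existsP; exists D; rewrite certD eqxx.
Qed.

Lemma domination_number_le_cert : domination_number e <= cert_domination_number e.
Proof.
rewrite /cert_domination_number; case: ex_minnP => m /existsP[C].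
by case/andP=> /andP[domC _] /eqP <- _; apply: domination_number_le.
Qed.

Lemma gamma_set_exists : exists D, gamma_set e D.
Proof.
rewrite /gamma_set /domination_number; case: ex_minnP => m /existsP[D hD] _.
by exists D.
Qed.

Lemma gamma_set_minimal (D : {set T}) v :
  gamma_set e D -> v \in D -> ~~ dominating e (D :\ v).
Proof.
case/andP=> _ /eqP cardD vD; apply/negP => /domination_number_le.
by rewrite -cardD (cardsD1 v D) vD ltnn.
Qed.

Lemma dominatingD1 (D : {set T}) v w :
  w \in D :\ v -> e v w ->
  (forall x, x \notin D -> e x v -> exists2 y, y \in D :\ v & e x y) ->
  dominating e D -> dominating e (D :\ v).
Proof.
move=> wDv evw redom /forallP domD; apply/forallP => x; apply/implyP.
case: (eqVneq x v) => [-> _|xv]; first by apply/exists_inP; exists w.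
rewrite in_setD1 xv /= => xD; have /exists_inP[y yD exy] := implyP (domD x) xD.
case: (eqVneq y v) => [yv|yv]; last by apply/exists_inP; exists y; rewrite ?inE ?yv.
by rewrite yv in exy; have [y' ? ?] := redom x xD exy; apply/exists_inP; exists y'.
Qed.

Definition inner_arcs (D : {set T}) : {set T * T} :=
  [set p | [&& p.1 \in D, p.2 \in D & e p.1 p.2]].

Hypotheses (esym : symmetric e) (eirr : irreflexive e).

Lemma inner_arcsU1 (A : {set T}) u :
  (forall w, w \in A -> ~~ e u w) -> inner_arcs (u |: A) = inner_arcs A.
Proof.
move=> uA; apply/setP => -[a b]; rewrite !inE /=.
case: (eqVneq a u) => [->|_]; case: (eqVneq b u) => [->|_] //=.
- by rewrite eirr !andbF.
- case bA: (b \in A); last by rewrite andbF.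
  by rewrite /= (negbTE (uA b bA)) andbF.
- case aA: (a \in A) => //=.
  by rewrite esym (negbTE (uA a aA)) andbF.
Qed.

Lemma inner_arcsD1_proper (D : {set T}) v w :
  v \in D -> w \in D -> e v w -> inner_arcs (D :\ v) \proper inner_arcs D.
Proof.
move=> vD wD evw; apply/properP; split.
  by apply/subsetP => -[a b]; rewrite !inE /= => /and3P[/andP[_ ->] /andP[_ ->]].
by exists (v, w); rewrite !inE /= ?vD ?wD ?evw ?eqxx.
Qed.

Lemma dominating_swap (D : {set T}) v u :
  nbhd e v :\: D = [set u] -> dominating e D -> dominating e (u |: (D :\ v)).
Proof.
move=> outv /forallP domD; have: u \in nbhd e v :\: D by rewrite outv set11.
rewrite !inE => /andP[uD evu]; apply/forallP => x; apply/implyP.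
case: (eqVneq x v) => [-> _|xv]; first by apply/exists_inP; exists u; rewrite ?setU11 // esym.
rewrite !inE xv /= negb_or => /andP[xu xD].
have /exists_inP[y yD exy] := implyP (domD x) xD.
case: (eqVneq y v) => [yv|yv]; last by apply/exists_inP; exists y; rewrite // !inE yv yD orbT.
have: x \in nbhd e v :\: D by rewrite !inE xD esym -yv.
by rewrite outv inE (negbTE xu).
Qed.

Lemma outer_nbhd_neq0 (D : {set T}) v :
  gamma_set e D -> v \in D -> 0 < deg e v -> nbhd e v :\: D != set0.
Proof.
move=> gD vD /card_gt0P[w wN]; apply/negP => /eqP outv.
have wD : w \in D.
  apply: contraT => wD; suff: w \in nbhd e v :\: D by rewrite outv inE.
  by rewrite inE wD.
have wv : w != v by apply: contraTneq wN => ->; rewrite inE eirr.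
apply: (negP (gamma_set_minimal gD vD)); apply: (dominatingD1 (w := w)).
- by rewrite in_setD1 wv.
- by rewrite inE in wN.
- move=> x xD exv; have: x \in nbhd e v :\: D by rewrite !inE xD esym.
  by rewrite outv inE.
- by case/andP: gD.
Qed.

Lemma gamma_set_swap_fewer_arcs (D : {set T}) v :
  gamma_set e D -> v \in D -> 2 <= deg e v -> #|nbhd e v :\: D| < 2 ->
  exists2 D', gamma_set e D' & #|inner_arcs D'| < #|inner_arcs D|.
Proof.
move=> gD vD degv outv_lt2.
have /cards1P[u outv] : #|nbhd e v :\: D| == 1.
  by rewrite eqn_leq -ltnS outv_lt2 card_gt0 outer_nbhd_neq0 // ltnW.
have: u \in nbhd e v :\: D by rewrite outv set11.
rewrite !inE => /andP[uD _].
have [w wN] : exists2 w, w \in nbhd e v & w \notin [set u].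
  apply/subsetPn; apply: contraTN degv => /subset_leq_card.
  by rewrite cards1 -ltnNge ltnS /deg.
rewrite in_set1 => wu.
have wD : w \in D.
  apply: contraT => wD; suff: w \in nbhd e v :\: D by rewrite outv inE (negbTE wu).
  by rewrite inE wD.
have evw : e v w by rewrite inE in wN.
have wv : w != v by apply: contraTneq evw => ->; rewrite eirr.
case: (boolP [exists w' in D :\ v, e u w']) => [/exists_inP[w' w'D euw'] | /exists_inP noarc].
  exfalso; apply: (negP (gamma_set_minimal gD vD)); apply: (dominatingD1 (w := w)).
  - by rewrite in_setD1 wv.
  - exact: evw.
  - move=> x xD exv; have: x \in nbhd e v :\: D by rewrite !inE xD esym.
    by rewrite outv inE => /eqP ->; exists w'.
  - by case/andP: gD.
case/andP: gD => domD /eqP cardD.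
exists (u |: (D :\ v)).
  rewrite /gamma_set dominating_swap //= cardsU1 in_setD1 (negbTE uD) andbF.
  by rewrite -cardD (cardsD1 v D) vD.
rewrite inner_arcsU1; first exact/proper_card/(inner_arcsD1_proper vD wD evw).
by move=> x xDv; apply/negP => eux; apply: noarc; exists x.
Qed.

End Domination.

Theorem corollary2p3 (T : finType) (e : rel T) :
  simple_graph e -> min_degree_ge e 2 ->
  (exists D : {set T}, gamma_set e D /\
     forall v, v \in D -> 2 <= #|nbhd e v :\: D|) /\
  domination_number e = cert_domination_number e.
Proof.
move=> [esym eirr] deg2; have [D0 gD0] := gamma_set_exists e.
case: (arg_minnP (fun D => #|inner_arcs e D|) gD0) => D gD Dmin.
have outer2 v : v \in D -> 2 <= #|nbhd e v :\: D|.
  move=> vD; rewrite leqNgt; apply/negP => lt2.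
  have [D' gD' fewer] := gamma_set_swap_fewer_arcs esym eirr gD vD (deg2 v) lt2.
  by move: (Dmin D' gD'); rewrite leqNgt fewer.
split; first by exists D.
apply/eqP; rewrite eqn_leq domination_number_le_cert /=.
case/andP: gD => domD /eqP <-; apply: cert_domination_number_le.
by rewrite /certified_dominating domD; apply/forall_inP => v /outer2 ->; rewrite orbT.
Qed.
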